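(* Let $G$ be a finite group, $\xi$ a linear character of $G$, and $\varepsilon$ either the trivial or the sign character of $S_2$. Let $SG_2=G\wr S_2$ and $HG_1=\{(g,g;\sigma)\mid g\in G,\sigma\in S_2\}\subset SG_2$, and let $\xi\otimes\varepsilon$ be the linear character $(g,g;\sigma)\mapsto\xi(g)\varepsilon(\sigma)$ of $HG_1$. Then $(\xi\otimes\varepsilon)\uparrow_{HG_1}^{SG_2}$ is multiplicity-free, i.e. $(SG_2,HG_1,\xi\otimes\varepsilon)$ is a Gelfand triple.
   Context: $G\wr S_2=\{(g_1,g_2;\sigma)\mid g_i\in G,\sigma\in S_2\}$ with multiplication $(g_1,g_2;\sigma)(h_1,h_2;\tau)=(g_1h_{\sigma^{-1}(1)},g_2h_{\sigma^{-1}(2)};\sigma\tau)$. A Gelfand triple $(G,H,\phi)$ means the induced representation $\phi\uparrow_H^G$ is multiplicity-free. *)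

From HB Require Import structures.
From mathcomp Require Import all_boot all_order all_algebra all_fingroup all_solvable all_field all_character.
Set Implicit Arguments. Unset Strict Implicit. Unset Printing Implicit Defensive.
Import GroupScope.

(* The wreath product G \wr S_2, realised on the carrier
   {ffun 'I_2 -> gT} * 'S_2 (for the finite group G = [set: gT]).
   An element (f; s) stands for (f 0, f 1; s).  The paper's product is
     (g_1,g_2;s)(h_1,h_2;t) = (g_1 h_{s^-1(1)}, g_2 h_{s^-1(2)}; s t)
   with s t the composite s o t.  In MathComp, (t * s) x = s (t x), so the
   composite s o t is written (t * s)%g. *)
Definition wreath2 (gT : finGroupType) := ({ffun 'I_2 -> gT} * 'S_2)%type.

HB.instance Definition _ (gT : finGroupType) := Finite.on (wreath2 gT).

Section Wreath.
Variable gT : finGroupType.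
Implicit Types x y z : wreath2 gT.

Definition wmul x y : wreath2 gT :=
  ([ffun i => x.1 i * y.1 (x.2^-1 i)], (y.2 * x.2)%g).
Definition wone : wreath2 gT := ([ffun _ => 1], 1%g).
Definition winv x : wreath2 gT := ([ffun i => (x.1 (x.2 i))^-1], (x.2^-1)%g).

Lemma wmulA : associative wmul.
Proof.
move=> [f s] [h t] [k r]; rewrite /wmul /=; congr pair; last by rewrite mulgA.
apply/ffunP=> i; rewrite !ffunE mulgA; congr (_ * _).
by rewrite invMg permM.
Qed.

Lemma wmul1 : left_id wone wmul.
Proof.
move=> [f s]; rewrite /wmul /wone /=; congr pair; last by rewrite mulg1.
by apply/ffunP=> i; rewrite !ffunE mul1g invg1 perm1.
Qed.

Lemma wmulV : left_inverse wone winv wmul.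
Proof.
move=> [f s]; rewrite /wmul /wone /winv /=; congr pair; last by rewrite mulgV.
by apply/ffunP=> i; rewrite !ffunE invgK mulVg.
Qed.

End Wreath.

HB.instance Definition _ (gT : finGroupType) :=
  Finite_isGroup.Build (wreath2 gT) (@wmulA gT) (@wmul1 gT) (@wmulV gT).

Lemma wreath2_mulE (gT : finGroupType) (x y : wreath2 gT) :
  (x * y)%g = ([ffun i => x.1 i * y.1 (x.2^-1 i)], (y.2 * x.2)%g).
Proof. by []. Qed.

Definition HG1_set (gT : finGroupType) : {set wreath2 gT} :=
  [set x : wreath2 gT | x.1 ord0 == x.1 ord_max].

Lemma HG1_group_set (gT : finGroupType) : group_set (HG1_set gT).
Proof.
apply/group_setP; split; first by rewrite inE /= !ffunE.
move=> [f s] [h t]; rewrite !inE /= => /eqP ef /eqP eh.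
rewrite !ffunE ef; apply/eqP; congr (_ * _).
have h2 : forall i : 'I_2, h i = h ord0.
  move=> i; have [->|] := eqVneq i ord0; first by [].
  move=> ne; have -> : i = ord_max by apply/val_inj; case: i ne => [[|[|]]] //= ? _; rewrite -(inj_eq val_inj).
  by rewrite eh.
by rewrite !h2.
Qed.

Canonical HG1 (gT : finGroupType) : {group wreath2 gT} := Group (HG1_group_set gT).

Definition trivial_S2 (s : 'S_2) : algC := 1%R.
Definition sign_S2 (s : 'S_2) : algC := ((-1) ^+ odd_perm s)%R.

(* Let K = G x G be the base group of SG_2, normal of index 2.  For an
   irreducible chi of SG_2 pick an irreducible constituent theta of Res_K chi;
   then ['Ind phi, chi] <= ['Res_K ('Ind phi), theta], which by Frobenius
   reciprocity is [phi, 'Res_HG1 ('Ind theta)].  Now 'Ind theta vanishes off K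
   and equals 2 theta on the diagonal (g,g;1), because the swap centralises
   it; since HG1 meets K in the diagonal, the product is
   |G|^-1 sum_g xi(g) theta(g,g)^*.  Writing theta = alpha (x) beta with
   alpha, beta irreducible characters of G, this is ['xi alpha^*, beta]_G, an
   inner product of two irreducible characters, hence at most 1. *)

From HB Require Import structures.
From mathcomp Require Import all_boot all_order all_algebra all_fingroup all_solvable all_field all_character.
Import GroupScope Order.TTheory GRing.Theory Num.Theory.
Local Open Scope ring_scope.
Set Implicit Arguments. Unset Strict Implicit.

Section CharacterBounds.
Variable gT : finGroupType.

Lemma cfmorph_lin_char (G : {group gT}) (phi : 'CF(G)) :
  phi 1%g = 1 -> {in G &, {morph phi : x y / (x * y)%g >-> x * y}} ->
  phi \is a linear_char.
Proof.
move=> phi1 phiM; rewrite qualifE /= phi1 eqxx andbT.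
have rG : mx_repr G (fun x => (phi x)%:M : 'M[algC]_1).
  by split=> [|x y Gx Gy]; rewrite ?phi1 ?phiM ?scalar_mxM.
have -> : phi = cfRepr (MxRepresentation rG).
  apply/cfun_inP=> x Gx; rewrite cfunE Gx /=.
  by rewrite mxtrace_scalar mulr1n.
exact: cfRepr_char.
Qed.

Lemma cfdot_irr_le1 (G : {group gT}) (u v : 'CF(G)) :
  u \in irr G -> v \in irr G -> '[u, v] <= 1.
Proof.
by move=> /irrP[i ->] /irrP[j ->]; rewrite cfdot_irr; case: (i == j); rewrite ?ler01.
Qed.

Lemma cfdot_char_irr_le_Res_constt (G K : {group gT}) (psi : 'CF(G))
    (i : Iirr G) (t : Iirr K) :
  psi \is a character -> t \in irr_constt ('Res[K] 'chi_i) ->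
  '[psi, 'chi_i] <= '['Res[K] psi, 'chi_t].
Proof.
move=> Npsi ti.
have natRes j : '['Res[K] 'chi[G]_j, 'chi_t] \in Num.nat.
  by rewrite Cnat_cfdot_char_irr ?cfRes_char ?irr_char.
have natPsi j : '[psi, 'chi_j] \in Num.nat by rewrite Cnat_cfdot_char_irr.
have Res_i_ge1 : 1 <= '['Res[K] 'chi_i, 'chi_t].
  by move: ti; rewrite irr_consttE; case/natrP: (natRes i) => n ->; rewrite pnatr_eq0 ler1n lt0n.
rewrite {2}[psi]cfun_sum_cfdot rmorph_sum cfdot_suml (bigD1 i) //=.
rewrite linearZ /= cfdotZl; apply: le_trans (ler_peMr (natr_ge0 (natPsi i)) Res_i_ge1) _.
rewrite lerDl sumr_ge0 // => j _.
by rewrite linearZ /= cfdotZl mulr_ge0 ?natr_ge0.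
Qed.

End CharacterBounds.

Lemma ord2_cases (i : 'I_2) : i = ord0 \/ i = ord_max.
Proof. by case: i => [[|[|]]] //= ?; [left|right]; apply/val_inj. Qed.

Section WreathBase.
Variable gT : finGroupType.
Implicit Types (x y : wreath2 gT) (g h : gT).
Local Notation W := [set: wreath2 gT].

Lemma wreath2_eq x y : x.1 =1 y.1 -> x.2 = y.2 -> x = y.
Proof. by case: x y => [f s] [k t] /= /ffunP-> ->. Qed.

Lemma wreath2_mul_fst x y i : (x * y)%g.1 i = (x.1 i * y.1 (x.2^-1 i))%g.
Proof. by rewrite wreath2_mulE /= ffunE. Qed.

Lemma wreath2_mul_snd x y : (x * y)%g.2 = (y.2 * x.2)%g.
Proof. by []. Qed.

Definition wbase : {set wreath2 gT} := [set x | x.2 == 1%g].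

Lemma wbase_group_set : group_set wbase.
Proof.
apply/group_setP; split=> [|x y]; rewrite !inE //.
by rewrite wreath2_mul_snd => /eqP-> /eqP->; rewrite mulg1.
Qed.
Canonical wbase_group := Group wbase_group_set.

Lemma wbase_normal : wbase <| W.
Proof.
rewrite /normal subsetT; apply/normsP=> y _; apply/setP=> x.
by rewrite mem_conjg !inE !wreath2_mul_snd invgK -mulgA -conjgE conjg_eq1.
Qed.

Definition wembed (i : 'I_2) g : wreath2 gT :=
  ([ffun j => if j == i then g else 1%g], 1%g).

Lemma wembedM i : {in [set: gT] &, {morph wembed i : g h / (g * h)%g}}.
Proof.
move=> g h _ _; apply: wreath2_eq => [j|]; last by rewrite /= mulg1.
by rewrite wreath2_mul_fst /= invg1 perm1 !ffunE; case: (j == i); rewrite ?mulg1.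
Qed.
Canonical wembed_morphism i := Morphism (wembedM i).

Definition wfactor i := (wembed_morphism i @* [set: gT])%G.

Lemma wfactorP i x : reflect (exists g, x = wembed i g) (x \in wfactor i).
Proof.
by rewrite /wfactor /= morphimEdom; apply: (iffP imsetP) => [[g _ ->]|[g ->]]; exists g.
Qed.

Lemma wembed_inj i : 'injm (wembed_morphism i).
Proof.
apply/injmP=> g h _ _ /(congr1 (fun x => x.1 i)) /=.
by rewrite !ffunE eqxx.
Qed.

Definition wdiag g : wreath2 gT := ([ffun => g], 1%g).

Lemma wdiag_wembed g : wdiag g = (wembed ord0 g * wembed ord_max g)%g.
Proof.
apply: wreath2_eq => [i|]; last by rewrite /= mulg1.
rewrite wreath2_mul_fst /= invg1 perm1 !ffunE.
by case: (ord2_cases i) => ->; rewrite ?mulg1 ?mul1g.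
Qed.

Lemma wbase_dprod : wfactor ord0 \x wfactor ord_max = wbase.
Proof.
have wfactor_sub i : wfactor i \subset wbase.
  by apply/subsetP=> x /wfactorP[g ->]; rewrite inE.
rewrite dprodE.
- apply/eqP; rewrite eqEsubset mulG_subG !wfactor_sub /=.
  apply/subsetP=> x; rewrite inE => /eqP x2.
  have -> : x = (wembed ord0 (x.1 ord0) * wembed ord_max (x.1 ord_max))%g.
    apply: wreath2_eq => [i|]; last by rewrite x2 /= mulg1.
    rewrite wreath2_mul_fst /= invg1 perm1 !ffunE.
    by case: (ord2_cases i) => ->; rewrite ?mulg1 ?mul1g.
  by apply: mem_mulg; apply/wfactorP; eexists.
- apply/centsP=> _ /wfactorP[g ->] _ /wfactorP[h ->].
  apply: wreath2_eq => [i|]; last by rewrite /= mulg1.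
  rewrite !wreath2_mul_fst /= invg1 perm1 !ffunE.
  by case: (ord2_cases i) => ->; rewrite ?mulg1 ?mul1g.
- apply/trivgP/subsetP=> _ /setIP[/wfactorP[g ->] /wfactorP[h eq_gh]].
  have /= := congr1 (fun x => x.1 ord0) eq_gh.
  have /= := congr1 (fun x => x.1 ord_max) eq_gh.
  rewrite !ffunE /= => _ ->.
  by rewrite (morph1 (wembed_morphism ord0)) inE.
Qed.

Lemma card_wbase : #|wbase| = (#|gT| ^ 2)%N.
Proof.
rewrite -(dprod_card wbase_dprod) !card_injm ?wembed_inj ?subsetT //.
by rewrite cardsT mulnn.
Qed.

Lemma card_wreath2 : #|W| = (2 * #|gT| ^ 2)%N.
Proof. by rewrite cardsT card_prod card_ffun card_ord card_Sn mulnC. Qed.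

End WreathBase.

Section InducedFromBase.
Variable gT : finGroupType.
Local Notation W := [set: wreath2 gT].
Implicit Types (th : 'CF(wbase gT)) (g : gT).

Lemma cfInd_wbase_out th x : x \notin wbase gT -> ('Ind[W] th) x = 0.
Proof. exact/cfun_onP/cfInd_normal/wbase_normal. Qed.

(* y is the swap w, which centralises wdiag g, times an element of the base. *)
Lemma wdiag_conj_wbase th g y : th (wdiag g ^ y)%g = th (wdiag g).
Proof.
pose w : wreath2 gT := ([ffun => 1%g], y.2).
have wKy : (w^-1 * y)%g \in wbase gT by rewrite inE /= mulgV.
have w_cent : (wdiag g ^ w)%g = wdiag g.
  rewrite conjgE; apply/(canLR (mulKg w)).
  apply: wreath2_eq => [i|]; last by rewrite /= mulg1 mul1g.
  by rewrite !wreath2_mul_fst /= !ffunE mulg1 mul1g.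
by rewrite -(mulKVg w y) conjgM w_cent cfunJ.
Qed.

Lemma cfInd_wbase_wdiag th g : ('Ind[W] th) (wdiag g) = 2 * th (wdiag g).
Proof.
rewrite cfIndE ?subsetT // (eq_bigr _ (fun y _ => wdiag_conj_wbase th g y)).
have Gnz : (#|gT| ^ 2)%:R != 0 :> algC.
  by rewrite pnatr_eq0 -lt0n expn_gt0; apply/orP; left; apply/card_gt0P; exists 1%g.
rewrite sumr_const card_wreath2 card_wbase -[th _ *+ _]mulr_natl natrM.
by rewrite (mulrC 2) -mulrA mulKf.
Qed.

End InducedFromBase.

Lemma S2_char1 (eps : 'S_2 -> algC) :
  eps = trivial_S2 \/ eps = sign_S2 -> eps 1%g = 1.
Proof. by case=> ->; rewrite /sign_S2 ?odd_perm1. Qed.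

Lemma S2_charM (eps : 'S_2 -> algC) :
  eps = trivial_S2 \/ eps = sign_S2 -> {morph eps : s t / (s * t)%g >-> s * t}.
Proof. by case=> -> s t; rewrite /sign_S2 ?mulr1 ?odd_permM ?signr_addb. Qed.

Section DiagonalSubgroup.
Variable gT : finGroupType.
Local Notation H := (HG1 gT).

Lemma HG1_fst x i : x \in H -> x.1 i = x.1 ord0.
Proof. by rewrite inE => /eqP x01; case: (ord2_cases i) => ->. Qed.

Lemma wdiag_HG1 g : wdiag g \in H.
Proof. by rewrite inE /= !ffunE. Qed.

Lemma HG1_wbase : H :&: wbase gT = [set wdiag g | g : gT].
Proof.
apply/setP=> x; apply/setIP/imsetP => [[xH] | [g _ ->]]; last by rewrite wdiag_HG1 inE.
rewrite inE => /eqP x2; exists (x.1 ord0) => //; apply: wreath2_eq => [i|//].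
by rewrite /= ffunE (HG1_fst i xH).
Qed.

Lemma card_HG1 : #|H| = (2 * #|gT|)%N.
Proof.
have -> : H = [set (wdiag p.1 * ([ffun => 1%g], p.2))%g | p : gT * 'S_2] :> {set _}.
  apply/setP=> x; apply/idP/imsetP => [xH | [[g s] _ ->]]; last first.
    by rewrite groupM ?wdiag_HG1 // inE /= !ffunE.
  exists (x.1 ord0, x.2) => //; apply: wreath2_eq => [i|]; last by rewrite /= mulg1.
  by rewrite wreath2_mul_fst /= !ffunE mulg1 (HG1_fst i xH).
rewrite card_imset; first by rewrite card_prod card_Sn mulnC.
move=> [g s] [h t] /= eq_gh; have /= := congr1 (fun x : wreath2 gT => x.2) eq_gh.
have /= := congr1 (fun x : wreath2 gT => x.1 ord0) eq_gh.
by rewrite !ffunE !mulg1 => -> ->.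
Qed.

End DiagonalSubgroup.

Section InducedLinearCharacter.
Variables (gT : finGroupType) (xi : 'CF([set: gT])) (eps : 'S_2 -> algC).
Variable phi : 'CF(HG1 gT).
Hypothesis xi_lin : xi \is a linear_char.
Hypothesis eps_S2 : eps = trivial_S2 \/ eps = sign_S2.
Hypothesis phiE : forall x, x \in HG1 gT -> phi x = xi (x.1 ord0) * eps x.2.
Local Notation W := [set: wreath2 gT].

Lemma phi_wdiag g : phi (wdiag g) = xi g.
Proof. by rewrite phiE ?wdiag_HG1 //= ffunE S2_char1 ?mulr1. Qed.

Lemma phi_lin_char : phi \is a linear_char.
Proof.
apply: cfmorph_lin_char => [|x y xH yH]; first by rewrite -[1%g]/(wdiag 1) phi_wdiag lin_char1.
rewrite !phiE ?groupM // wreath2_mul_fst wreath2_mul_snd (HG1_fst _ yH).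
by rewrite lin_charM ?inE // S2_charM // (mulrC (eps y.2)) mulrACA.
Qed.

Lemma cfdot_phi_Res_Ind (th : 'CF(wbase gT)) :
  '[phi, 'Res[HG1 gT] ('Ind[W] th)] = #|gT|%:R^-1 * \sum_g xi g * (th (wdiag g))^*.
Proof.
have diag_term g :
    phi (wdiag g) * ('Res[HG1 gT] ('Ind[W] th) (wdiag g))^* = 2 * (xi g * (th (wdiag g))^*).
  rewrite cfResE ?subsetT ?wdiag_HG1 // cfInd_wbase_wdiag phi_wdiag.
  by rewrite rmorphM rmorph_nat mulrCA.
rewrite cfdotE card_HG1 (big_setID (wbase gT)) /= [X in _ + X]big1 ?addr0; last first.
  move=> x /setDP[xH xK].
  by rewrite cfResE ?subsetT // (cfInd_wbase_out th xK) conjC0 mulr0.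
rewrite -[HG1_set gT]/(gval (HG1 gT)) HG1_wbase big_imset /=; last first.
  by move=> g h _ _ [/ffunP/(_ ord0)]; rewrite !ffunE.
rewrite (eq_bigr _ (fun g _ => diag_term g)) -mulr_sumr natrM invfM (mulrC 2%:R^-1).
by rewrite -mulrA mulKf // pnatr_eq0.
Qed.

End InducedLinearCharacter.

Lemma wbase_irr_wdiag (gT : finGroupType) (t : Iirr (wbase gT)) :
  exists2 alpha, alpha \in irr [set: gT] &
  exists2 beta, beta \in irr [set: gT] &
    forall g, 'chi_t (wdiag g) = alpha g * beta g.
Proof.
have KxK := wbase_dprod gT.
rewrite -(inv_dprod_IirrK KxK t); case: (inv_dprod_Iirr KxK t) => a b.
exists (cfMorph 'chi_a); first by rewrite cfMorph_irr ?mem_irr.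
exists (cfMorph 'chi_b); first by rewrite cfMorph_irr ?mem_irr.
move=> g; rewrite dprod_IirrE wdiag_wembed cfDprodE ?mem_morphim ?inE //.
by rewrite !cfMorphE ?inE.
Qed.

Lemma wdiag_irr_avg_le1 (gT : finGroupType) (xi : 'CF([set: gT])) (t : Iirr (wbase gT)) :
  xi \is a linear_char -> #|gT|%:R^-1 * \sum_g xi g * ('chi_t (wdiag g))^* <= 1.
Proof.
move=> xi_lin; have [alpha alpha_irr [beta beta_irr chi_tE]] := wbase_irr_wdiag t.
have -> : #|gT|%:R^-1 * \sum_g xi g * ('chi_t (wdiag g))^* = '[xi * alpha^*%CF, beta].
  rewrite cfdotE cardsT; congr (_ * _); apply: eq_big => [g|g _]; first by rewrite inE.
  by rewrite chi_tE !cfunE rmorphM mulrA.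
apply: cfdot_irr_le1 beta_irr; apply: mul_lin_irr => //.
by case/irrP: alpha_irr => i ->; apply: cfConjC_irr.
Qed.

Unset Implicit Arguments. Set Strict Implicit.

Theorem proposition3p3 (gT : finGroupType) (xi : 'CF([set: gT]))
    (eps : 'S_2 -> algC) (phi : 'CF(HG1 gT)) :
  xi \is a linear_char ->
  eps = trivial_S2 \/ eps = sign_S2 ->
  (forall x : wreath2 gT, x \in HG1 gT -> phi x = xi (x.1 ord0) * eps x.2) ->
  forall i : Iirr [set: wreath2 gT],
    '['Ind[[set: wreath2 gT]] phi, 'chi_i] <= 1.
Proof.
move=> xi_lin eps_S2 phiE i.
have [t t_constt] := constt_cfRes_irr (wbase gT) i.
have Ind_phi_char : 'Ind[[set: wreath2 gT]] phi \is a character.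
  by rewrite cfInd_char ?lin_charW ?(phi_lin_char xi_lin eps_S2 phiE).
apply: le_trans (cfdot_char_irr_le_Res_constt Ind_phi_char t_constt) _.
rewrite cfdot_Res_l -Frobenius_reciprocity (cfdot_phi_Res_Ind eps_S2 phiE).
exact: wdiag_irr_avg_le1.
Qed.
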